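(* Let $\mathcal P$ be a set of pre-tangles in a graph $G$, let $N$ be a nested set of $\mathcal P$-relevant proper separations of $G$ which efficiently distinguishes $\mathcal P$, and let $(\vec s_i)_{i\in\mathbb N}$ be a strictly increasing sequence of orientations of separations in $N$. If the orders $|s_i|$ are strictly increasing, then there is a strictly increasing sequence $(\vec s_i')_{i\in\mathbb N}$ of orientations of separations in $N$ which contains $(\vec s_i)_i$ as a subsequence and is strongly $\mathcal P$-relevant.
   Context: Notation: $s$ denotes a separation (an unordered pair $\{A,B\}$ of subsets of $V(G)$ with $A\cup B=V(G)$ and no edge between $A\setminus B$ and $B\setminus A$; order $|s|=|A\cap B|$; proper if $A\ne V(G)\ne B$), $\vec s,\overleftarrow{s}$ its two orientations; oriented separations are ordered by $(A,B)\le(C,D)$ iff $A\subseteq C$ and $B\supseteq D$. Nested: some orientations comparable. A set $O$ of oriented separations is consistent if there are no $(A,B),(C,D)\in O$ with $\{A,B\}\ne\{C,D\}$ and $(B,A)\le(C,D)$. A pre-tangle is a consistent set $P$ which, for some $k\in\mathbb N\cup\{\aleph_0\}$, contains exactly one orientation of every separation of order $<k$ and nothing else. A separation distinguishes two pre-tangles if both contain an orientation of it but different ones; efficiently if of minimum order among such. $N$ efficiently distinguishes $\mathcal P$ if any two pre-tangles in $\mathcal P$ distinguished by some separation are efficiently distinguished by an element of $N$. A separation is $\mathcal P$-relevant if it efficiently distinguishes some two pre-tangles in $\mathcal P$. A pair $\vec s<\vec t$ is strongly $\mathcal P$-relevant if there are $O,P,Q\in\mathcal P$ such that $s$ efficiently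 distinguishes $O$ and $P$ with $\vec s\in P$, and $t$ efficiently distinguishes $P$ and $Q$ with $\overleftarrow{t}\in P$; a strictly increasing sequence is strongly $\mathcal P$-relevant if all consecutive pairs are. *)

(* graphs on an arbitrary (possibly infinite) vertex type,
   sets represented as predicates V -> Prop. *)
From Stdlib Require Import List PeanoNat.
Import ListNotations.

Section Separations.
Variable V : Type.
Variable E : V -> V -> Prop.

(* an oriented separation (A,B); the separation {A,B} is represented by
   either of its orientations *)
Definition osep := ((V -> Prop) * (V -> Prop))%type.

Definition flip (s : osep) : osep := (snd s, fst s).

Definition is_sep (s : osep) : Prop :=
  (forall v, fst s v \/ snd s v) /\
  (forall x y, fst s x -> ~ snd s x -> snd s y -> ~ fst s y ->
     ~ E x y /\ ~ E y x).

Definition proper_sep (s : osep) : Prop :=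
  is_sep s /\ (exists v, ~ fst s v) /\ (exists v, ~ snd s v).

Definition same_sep (s t : osep) : Prop := s = t \/ s = flip t.

Definition has_order (s : osep) (n : nat) : Prop :=
  exists l : list V, NoDup l /\ length l = n /\
    (forall x, In x l <-> (fst s x /\ snd s x)).

(* cardinal comparison |s| <= |t| : an injection from A cap B into C cap D *)
Definition order_le (s t : osep) : Prop :=
  exists f : V -> V,
    (forall x, fst s x -> snd s x -> fst t (f x) /\ snd t (f x)) /\
    (forall x y, fst s x -> snd s x -> fst s y -> snd s y -> f x = f y -> x = y).

Definition order_lt (s t : osep) : Prop := order_le s t /\ ~ order_le t s.

(* |s| < k, where k = Some n means k = n in N and k = None means k = aleph_0 *)
Definition order_below (s : osep) (k : option nat) : Prop :=
  match k with
  | Some n => exists m, has_order s m /\ m < n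
  | None => exists m, has_order s m
  end.

Definition ole (s t : osep) : Prop :=
  (forall v, fst s v -> fst t v) /\ (forall v, snd t v -> snd s v).

Definition olt (s t : osep) : Prop := ole s t /\ s <> t.

Definition consistent (O : osep -> Prop) : Prop :=
  forall s t, O s -> O t -> ~ same_sep s t -> ~ ole (flip s) t.

Definition pre_tangle (P : osep -> Prop) : Prop :=
  consistent P /\
  exists k : option nat,
    (forall s, P s -> is_sep s /\ order_below s k) /\
    (forall s, is_sep s -> order_below s k ->
       (P s \/ P (flip s)) /\ (s <> flip s -> ~ (P s /\ P (flip s)))).

Definition distinguishes (s : osep) (P1 P2 : osep -> Prop) : Prop :=
  s <> flip s /\ ((P1 s /\ P2 (flip s)) \/ (P1 (flip s) /\ P2 s)).

Definition eff_distinguishes (s : osep) (P1 P2 : osep -> Prop) : Prop :=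
  is_sep s /\ distinguishes s P1 P2 /\
  forall t, is_sep t -> distinguishes t P1 P2 -> order_le s t.

(* a set of separations N, given by a set of representing orientations:
   the separation of s lies in N *)
Definition sep_in (N : osep -> Prop) (s : osep) : Prop := N s \/ N (flip s).

Definition nested (N : osep -> Prop) : Prop :=
  forall s t, N s -> N t ->
    ole s t \/ ole t s \/ ole s (flip t) \/ ole (flip t) s.

Definition eff_distinguishes_set (N : osep -> Prop)
    (PP : (osep -> Prop) -> Prop) : Prop :=
  forall P1 P2, PP P1 -> PP P2 ->
    (exists t, is_sep t /\ distinguishes t P1 P2) ->
    exists s, sep_in N s /\ eff_distinguishes s P1 P2.

Definition relevant (PP : (osep -> Prop) -> Prop) (s : osep) : Prop :=
  exists P1 P2, PP P1 /\ PP P2 /\ eff_distinguishes s P1 P2.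

Definition strongly_relevant_pair (PP : (osep -> Prop) -> Prop) (s t : osep) : Prop :=
  olt s t /\
  exists O P Q, PP O /\ PP P /\ PP Q /\
    eff_distinguishes s O P /\ P s /\
    eff_distinguishes t P Q /\ P (flip t).

Definition strictly_increasing (u : nat -> osep) : Prop :=
  forall i, olt (u i) (u (S i)).

Definition strongly_relevant_seq (PP : (osep -> Prop) -> Prop) (u : nat -> osep) : Prop :=
  strictly_increasing u /\ forall i, strongly_relevant_pair PP (u i) (u (S i)).

End Separations.

Arguments flip {V}.
Arguments same_sep {V}.
Arguments has_order {V}.
Arguments order_le {V}.
Arguments order_lt {V}.
Arguments order_below {V}.
Arguments ole {V}.
Arguments olt {V}.
Arguments consistent {V}.
Arguments distinguishes {V}.
Arguments sep_in {V}.
Arguments nested {V}.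
Arguments strictly_increasing {V}.

(* Between two consecutive terms s < t of the sequence at most one separation of N
   has to be inserted.  Let X, Qt be pre-tangles efficiently distinguished by t with
   X containing the small side of t, and Ps, Qs pre-tangles efficiently distinguished
   by s with Qs containing s.  As |s| < |t|, X contains s.  If s efficiently
   distinguishes Ps and X, then s < t is strongly relevant via Ps, X, Qt.  Otherwise
   some separation of order < |s| distinguishes Ps from X; it cannot distinguish Ps
   from Qs, so it distinguishes Qs from X, and N contains a separation rho
   efficiently distinguishing Qs and X.  Consistency of the four pre-tangles and
   nestedness of N force s < rho < t, and s < rho, rho < t are strongly relevant via
   Ps, Qs, X and Qs, X, Qt respectively. *)

From Stdlib Require Import List PeanoNat Lia Classical ClassicalEpsilon.

Section OrientedSeparations.
Context {V : Type}.
Implicit Types (s t u r : osep V) (P Q X : osep V -> Prop).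

Definition finite_order s : Prop := exists m, has_order s m.

Lemma flip_involutive s : flip (flip s) = s.
Proof. destruct s; reflexivity. Qed.

Lemma ole_trans s t u : ole s t -> ole t u -> ole s u.
Proof. intros [H1 H2] [H3 H4]; split; auto. Qed.

Lemma ole_flip s t : ole s t -> ole (flip t) (flip s).
Proof. intros [H1 H2]; split; auto. Qed.

Lemma ole_flip_r s t : ole s (flip t) -> ole t (flip s).
Proof. intro H. rewrite <- (flip_involutive t) at 1. exact (ole_flip _ _ H). Qed.

Lemma ole_flip_l s t : ole (flip s) t -> ole (flip t) s.
Proof. intro H. rewrite <- (flip_involutive s). exact (ole_flip _ _ H). Qed.

Lemma order_le_refl s : order_le s s.
Proof. exists (fun x => x). split; auto. Qed.

Lemma order_le_trans s t u : order_le s t -> order_le t u -> order_le s u.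
Proof.
  intros [f [F1 F2]] [g [G1 G2]]. exists (fun x => g (f x)). split.
  - intros x Hx1 Hx2. destruct (F1 x Hx1 Hx2). apply G1; auto.
  - intros x y Hx1 Hx2 Hy1 Hy2 Heq.
    destruct (F1 x Hx1 Hx2), (F1 y Hy1 Hy2). apply F2; auto.
Qed.

Lemma order_le_flip_l s t : order_le (flip s) t <-> order_le s t.
Proof.
  destruct s as [A B]; unfold order_le; simpl.
  split; intros [f [F1 F2]]; exists f; split; intros; auto.
Qed.

Lemma order_le_flip_r s t : order_le s (flip t) <-> order_le s t.
Proof.
  destruct t as [A B]; unfold order_le; simpl.
  split; intros [f [F1 F2]]; exists f; split; auto;
    intros x H1 H2; destruct (F1 x H1 H2); auto.
Qed.

Lemma same_sep_order_le s t : same_sep s t -> order_le s t /\ order_le t s.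
Proof.
  intros [-> | ->]; rewrite ?order_le_flip_l, ?order_le_flip_r; split; apply order_le_refl.
Qed.

Lemma has_order_flip s m : has_order s m -> has_order (flip s) m.
Proof.
  destruct s as [A B]; intros [l [Hl [Hlen Hmem]]].
  exists l; split; [| split]; auto. intro x. rewrite Hmem. simpl. tauto.
Qed.

Lemma finite_order_flip s : finite_order s -> finite_order (flip s).
Proof. intros [m Hm]. exists m. apply has_order_flip, Hm. Qed.

Lemma has_order_le s t m n : has_order s m -> has_order t n -> order_le s t -> m <= n.
Proof.
  intros [l1 [N1 [<- M1]]] [l2 [N2 [<- M2]]] [f [F1 F2]].
  rewrite <- (length_map f l1). apply NoDup_incl_length.
  - apply NoDup_map_NoDup_ForallPairs; auto.
    intros x y Hx Hy. apply M1 in Hx, Hy. apply F2; tauto.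
  - intros y Hy. apply in_map_iff in Hy. destruct Hy as [x [<- Hx]].
    apply M2. apply M1 in Hx. apply F1; tauto.
Qed.

Lemma list_injection (l1 l2 : list V) :
  NoDup l2 -> length l1 <= length l2 ->
  exists f : V -> V, (forall x, In x l1 -> In (f x) l2) /\
    (forall x y, In x l1 -> In y l1 -> f x = f y -> x = y).
Proof.
  revert l2; induction l1 as [|a l1 IH]; intros l2 N2 Hlen.
  - exists (fun x => x). split; intros; contradiction.
  - destruct l2 as [|b l2]; simpl in Hlen; [lia|].
    inversion N2 as [|? ? Hb N2']; subst.
    destruct (IH l2 N2' ltac:(lia)) as [g [G1 G2]].
    exists (fun x => if excluded_middle_informative (x = a) then b else g x).
    split.
    + intros x Hx. destruct (excluded_middle_informative (x = a)); [left; auto|].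
      right. apply G1. destruct Hx; [congruence | auto].
    + intros x y Hx Hy.
      destruct (excluded_middle_informative (x = a)),
               (excluded_middle_informative (y = a)); intro Heq.
      * congruence.
      * exfalso. apply Hb. rewrite Heq. apply G1. destruct Hy; [congruence | auto].
      * exfalso. apply Hb. rewrite <- Heq. apply G1. destruct Hx; [congruence | auto].
      * apply G2; auto; [destruct Hx | destruct Hy]; congruence || auto.
Qed.

Lemma order_le_of_has_order s t m n :
  has_order s m -> has_order t n -> m <= n -> order_le s t.
Proof.
  intros [l1 [N1 [<- M1]]] [l2 [N2 [<- M2]]] Hle.
  destruct (list_injection l1 l2 N2 Hle) as [f [F1 F2]].
  exists f. split.
  - intros x H1 H2. apply M2, F1, M1; auto.
  - intros x y H1 H2 H3 H4. apply F2; apply M1; auto.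
Qed.

Lemma order_le_total s t :
  finite_order s -> finite_order t -> ~ order_le s t -> order_le t s.
Proof.
  intros [m Hm] [n Hn] Hst. destruct (Nat.le_gt_cases m n).
  - exfalso. exact (Hst (order_le_of_has_order _ _ _ _ Hm Hn H)).
  - apply (order_le_of_has_order _ _ _ _ Hn Hm). lia.
Qed.

Lemma sep_in_flip (N : osep V -> Prop) s : sep_in N s -> sep_in N (flip s).
Proof. unfold sep_in. rewrite flip_involutive. tauto. Qed.

Definition ole_comparable s t : Prop :=
  ole s t \/ ole t s \/ ole s (flip t) \/ ole (flip t) s.

Lemma ole_comparable_sym s t : ole_comparable s t -> ole_comparable t s.
Proof.
  intros [H | [H | [H | H]]]; unfold ole_comparable; auto using ole_flip_r, ole_flip_l.
Qed.

Lemma ole_comparable_flip_l s t : ole_comparable s t -> ole_comparable (flip s) t.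
Proof.
  intros [H | [H | [H | H]]]; unfold ole_comparable.
  - right; right; right. exact (ole_flip _ _ H).
  - right; right; left. exact (ole_flip _ _ H).
  - right; left. exact (ole_flip_r _ _ H).
  - left. exact (ole_flip_l _ _ H).
Qed.

Lemma nested_comparable (N : osep V -> Prop) s t :
  nested N -> sep_in N s -> sep_in N t -> ole_comparable s t.
Proof.
  intros HN Hs Ht.
  assert (Hflip_r : forall x u, ole_comparable x u -> ole_comparable x (flip u))
    by (intros x u Hu;
        apply ole_comparable_sym, ole_comparable_flip_l, ole_comparable_sym, Hu).
  destruct Hs as [Hs | Hs]; [| rewrite <- (flip_involutive s); apply ole_comparable_flip_l];
  (destruct Ht as [Ht | Ht]; [| rewrite <- (flip_involutive t); apply Hflip_r]);
  apply HN; auto.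
Qed.

Lemma distinguishes_intro r P Q : r <> flip r -> P (flip r) -> Q r -> distinguishes r P Q.
Proof. split; auto. Qed.

Lemma distinguishes_sym r P Q : distinguishes r P Q -> distinguishes r Q P.
Proof. intros [Hne [[? ?] | [? ?]]]; split; auto. Qed.

Lemma distinguishes_flip r P Q : distinguishes r P Q -> distinguishes (flip r) P Q.
Proof.
  unfold distinguishes. rewrite flip_involutive.
  intros [Hne Hor]; split; [intro H; apply Hne; auto | tauto].
Qed.

Lemma distinguishes_split r P Q X :
  distinguishes r P X -> Q r \/ Q (flip r) -> distinguishes r P Q \/ distinguishes r Q X.
Proof. intros [Hne [[? ?] | [? ?]]] [? | ?]; unfold distinguishes; tauto. Qed.

End OrientedSeparations.

Section PreTangles.
Variables (V : Type) (E : V -> V -> Prop).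
Implicit Types (s t r : osep V) (P Q X : osep V -> Prop).

Lemma is_sep_flip s : is_sep V E s -> is_sep V E (flip s).
Proof.
  destruct s as [A B]; intros [Hcov Hedge]; split; simpl in *.
  - intro v; destruct (Hcov v); auto.
  - intros x y Hx Hnx Hy Hny. destruct (Hedge y x Hy Hny Hx Hnx); auto.
Qed.

Lemma eff_distinguishes_sym s P Q :
  eff_distinguishes V E s P Q -> eff_distinguishes V E s Q P.
Proof.
  intros [Hs [Hd Hmin]]. split; [| split]; auto using distinguishes_sym.
Qed.

Lemma eff_distinguishes_flip s P Q :
  eff_distinguishes V E s P Q -> eff_distinguishes V E (flip s) P Q.
Proof.
  intros [Hs [Hd Hmin]]. split; [| split]; auto using is_sep_flip, distinguishes_flip.
  intros t Ht Htd. apply order_le_flip_l; auto.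
Qed.

Lemma eff_distinguishes_le s P Q r :
  eff_distinguishes V E s P Q -> is_sep V E r -> distinguishes r P Q -> order_le s r.
Proof. intros [_ [_ Hmin]]; apply Hmin. Qed.

Lemma eff_distinguishes_sides s P Q :
  eff_distinguishes V E s P Q -> (P (flip s) /\ Q s) \/ (P s /\ Q (flip s)).
Proof. intros [_ [[_ H] _]]; tauto. Qed.

Lemma pre_tangle_same_sep P s t :
  pre_tangle V E P -> P s -> P t -> ole (flip s) t -> same_sep s t.
Proof. intros [Hcons _] Hs Ht Hle. apply NNPP. intro Hne. exact (Hcons s t Hs Ht Hne Hle). Qed.

Lemma pre_tangle_both_sides P r : pre_tangle V E P -> P r -> P (flip r) -> r = flip r.
Proof.
  intros [_ [k [Hsub Hexact]]] Hr Hfr. destruct (Hsub r Hr) as [Hsep Hbelow].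
  apply NNPP. intro Hne. exact (proj2 (Hexact r Hsep Hbelow) Hne (conj Hr Hfr)).
Qed.

Lemma pre_tangle_finite_order P r : pre_tangle V E P -> P r -> finite_order r.
Proof.
  intros [_ [k [Hsub _]]] Hr. destruct (Hsub r Hr) as [_ Hbelow].
  destruct k; simpl in Hbelow; [destruct Hbelow as [m [Hm _]]; exists m |]; auto.
Qed.

Lemma pre_tangle_orients P x r :
  pre_tangle V E P -> P x -> is_sep V E r -> finite_order r -> order_le r x ->
  P r \/ P (flip r).
Proof.
  intros [_ [k [Hsub Hexact]]] Hx Hr [m Hm] Hle. destruct (Hsub x Hx) as [_ Hbelow].
  apply (Hexact r Hr).
  destruct k as [n |]; simpl in *; [| eauto].
  destruct Hbelow as [mx [Hmx Hlt]]. exists m. split; auto.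
  pose proof (has_order_le _ _ _ _ Hm Hmx Hle). lia.
Qed.

Lemma distinguishes_finite_order r P Q :
  pre_tangle V E P -> distinguishes r P Q -> finite_order r.
Proof.
  intros HP [_ [[Hr _] | [Hr _]]].
  - exact (pre_tangle_finite_order P r HP Hr).
  - rewrite <- (flip_involutive r). apply finite_order_flip.
    exact (pre_tangle_finite_order P _ HP Hr).
Qed.

Lemma eff_distinguishes_agree_below s P Q r :
  pre_tangle V E P -> eff_distinguishes V E s P Q ->
  is_sep V E r -> finite_order r -> ~ order_le s r -> Q r -> P r.
Proof.
  intros HP Hs Hr Hfin Hsr HQr.
  assert (Hfin_s : finite_order s).
  { destruct Hs as [_ [Hd _]]. exact (distinguishes_finite_order s P Q HP Hd). }
  pose proof (order_le_total _ _ Hfin_s Hfin Hsr) as Hrs.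
  assert (HPr : P r \/ P (flip r)).
  { destruct (eff_distinguishes_sides _ _ _ Hs) as [[HPs _] | [HPs _]];
      [apply (pre_tangle_orients P (flip s)) | apply (pre_tangle_orients P s)];
      rewrite ?order_le_flip_r; auto. }
  destruct HPr as [HPr | HPr]; auto.
  destruct (classic (r = flip r)) as [Heq | Hne]; [rewrite Heq; auto |].
  exfalso. apply Hsr. apply (eff_distinguishes_le s P Q r Hs Hr).
  exact (distinguishes_intro r P Q Hne HPr HQr).
Qed.

End PreTangles.

Section Refinement.
Variables (V : Type) (E : V -> V -> Prop).
Variable PP : (osep V -> Prop) -> Prop.
Variable N : osep V -> Prop.
Hypothesis HPP : forall P, PP P -> pre_tangle V E P.
Hypothesis HNrel : forall s, N s -> relevant V E PP s.
Hypothesis HNnested : nested N.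
Hypothesis HNeff : eff_distinguishes_set V E N PP.

Lemma relevant_oriented r : sep_in N r ->
  exists P Q, PP P /\ PP Q /\ eff_distinguishes V E r P Q /\ P (flip r) /\ Q r.
Proof.
  intro Hr.
  assert (Hrel : exists P Q, PP P /\ PP Q /\ eff_distinguishes V E r P Q).
  { destruct Hr as [Hr | Hr]; destruct (HNrel _ Hr) as [P [Q [HP [HQ Heff]]]].
    - exists P, Q. auto.
    - exists P, Q. rewrite <- (flip_involutive r). auto using eff_distinguishes_flip. }
  destruct Hrel as [P [Q [HP [HQ Heff]]]].
  destruct (eff_distinguishes_sides _ _ _ _ _ Heff) as [[HPr HQr] | [HPr HQr]].
  - exists P, Q. auto.
  - exists Q, P. auto using eff_distinguishes_sym.
Qed.

Lemma eff_separation_in_nested_set P Q : PP P -> PP Q ->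
  (exists t, is_sep V E t /\ distinguishes t P Q) ->
  exists r, sep_in N r /\ eff_distinguishes V E r P Q /\ P (flip r) /\ Q r.
Proof.
  intros HP HQ Hd. destruct (HNeff P Q HP HQ Hd) as [r [Hr Heff]].
  destruct (eff_distinguishes_sides _ _ _ _ _ Heff) as [[HPr HQr] | [HPr HQr]].
  - exists r. auto.
  - exists (flip r). rewrite flip_involutive.
    auto using sep_in_flip, eff_distinguishes_flip.
Qed.

Section Gap.
Variables (s t : osep V) (Ps Qs X Qt : osep V -> Prop).
Hypothesis Hs_in : sep_in N s.
Hypothesis Ht_in : sep_in N t.
Hypothesis Hst : olt s t.
Hypothesis Hst_order : order_le s t.
Hypothesis Hts_order : ~ order_le t s.
Hypotheses (HPs : PP Ps) (HQs : PP Qs) (HX : PP X) (HQt : PP Qt).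
Hypotheses (Hs_eff : eff_distinguishes V E s Ps Qs) (HPs_s : Ps (flip s)) (HQs_s : Qs s).
Hypotheses (Ht_eff : eff_distinguishes V E t X Qt) (HX_t : X (flip t)) (HQt_t : Qt t).

Let Hs_sep : is_sep V E s := proj1 Hs_eff.
Let Hs_fin : finite_order s := pre_tangle_finite_order V E Qs s (HPP Qs HQs) HQs_s.

Lemma gap_middle_contains_lower : X s.
Proof.
  assert (Hst_flip : order_le s (flip t)) by now rewrite order_le_flip_r.
  destruct (pre_tangle_orients V E X (flip t) s (HPP X HX) HX_t Hs_sep Hs_fin Hst_flip)
    as [HXs | HXs]; [exact HXs |].
  exfalso.
  assert (HQt_s : Qt (flip s)).
  { apply (eff_distinguishes_agree_below V E t Qt X); auto using eff_distinguishes_sym,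
      is_sep_flip, finite_order_flip.
    now rewrite order_le_flip_r. }
  assert (Hsame : same_sep (flip s) t).
  { apply (pre_tangle_same_sep V E Qt); auto. rewrite flip_involutive. exact (proj1 Hst). }
  apply Hts_order. rewrite <- order_le_flip_r. apply (same_sep_order_le _ _ Hsame).
Qed.

Lemma gap_direct : eff_distinguishes V E s Ps X -> strongly_relevant_pair V E PP s t.
Proof.
  intro Hs_eff'. split; [exact Hst |].
  exists Ps, X, Qt. repeat (split; [assumption |]).
  split; [exact gap_middle_contains_lower |]. auto.
Qed.

Lemma gap_separation : ~ eff_distinguishes V E s Ps X ->
  exists rho, sep_in N rho /\ eff_distinguishes V E rho Qs X /\
    Qs (flip rho) /\ X rho /\ ~ order_le s rho.
Proof.
  intro Hnot_eff.
  assert (Hne : s <> flip s) by apply (proj1 (proj1 (proj2 Hs_eff))).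
  assert (Hshort : exists r, is_sep V E r /\ distinguishes r Ps X /\ ~ order_le s r).
  { apply NNPP. intro Hnone. apply Hnot_eff.
    split; [exact Hs_sep | split].
    - exact (distinguishes_intro s Ps X Hne HPs_s gap_middle_contains_lower).
    - intros r Hr Hd. apply NNPP. intro Hsr. apply Hnone. exists r. auto. }
  destruct Hshort as [r [Hr [Hd Hsr]]].
  pose proof (distinguishes_finite_order V E r Ps X (HPP Ps HPs) Hd) as Hr_fin.
  assert (HQs_r : Qs r \/ Qs (flip r)).
  { apply (pre_tangle_orients V E Qs s); auto using order_le_total. }
  destruct (distinguishes_split r Ps Qs X Hd HQs_r) as [Hd' | Hd'].
  - exfalso. exact (Hsr (eff_distinguishes_le V E s Ps Qs r Hs_eff Hr Hd')).
  - destruct (eff_separation_in_nested_set Qs X HQs HX (ex_intro _ r (conj Hr Hd')))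
      as [rho [Hrho_in [Hrho_eff [HQs_rho HX_rho]]]].
    exists rho. repeat (split; [assumption |]).
    intro Hs_rho. apply Hsr. apply (order_le_trans _ rho); auto.
    exact (eff_distinguishes_le V E rho Qs X r Hrho_eff Hr Hd').
Qed.

Section Middle.
Variable rho : osep V.
Hypothesis Hrho_in : sep_in N rho.
Hypothesis Hrho_eff : eff_distinguishes V E rho Qs X.
Hypotheses (HQs_rho : Qs (flip rho)) (HX_rho : X rho).
Hypothesis Hs_rho : ~ order_le s rho.

Let Hrho_sep : is_sep V E rho := proj1 Hrho_eff.
Let Hrho_fin : finite_order rho := pre_tangle_finite_order V E X rho (HPP X HX) HX_rho.
Let Hrho_s : order_le rho s := order_le_total s rho Hs_fin Hrho_fin Hs_rho.

Lemma gap_not_below_flip : ~ ole s (flip rho).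
Proof.
  intro Hle.
  assert (HPs_rho : Ps (flip rho)).
  { apply (eff_distinguishes_agree_below V E s Ps Qs);
      auto using is_sep_flip, finite_order_flip.
    now rewrite order_le_flip_r. }
  assert (Hsame : same_sep (flip s) (flip rho)).
  { apply (pre_tangle_same_sep V E Ps); auto. }
  apply Hs_rho. destruct (same_sep_order_le _ _ Hsame) as [H _].
  now rewrite order_le_flip_l, order_le_flip_r in H.
Qed.

Lemma gap_lower : olt s rho.
Proof.
  destruct (nested_comparable N s rho HNnested Hs_in Hrho_in) as [Hle | [Hle | [Hle | Hle]]].
  - split; [exact Hle |]. intros <-. exact (Hs_rho (order_le_refl s)).
  - exfalso. assert (Hsame : same_sep (flip rho) s).
    { apply (pre_tangle_same_sep V E Qs); auto. }
    apply Hs_rho. destruct (same_sep_order_le _ _ Hsame) as [_ H].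
    now rewrite order_le_flip_r in H.
  - exfalso. exact (gap_not_below_flip Hle).
  - exfalso. assert (Hsame : same_sep rho s) 
      by (apply (pre_tangle_same_sep V E X); auto using gap_middle_contains_lower).
    apply Hs_rho. exact (proj2 (same_sep_order_le _ _ Hsame)).
Qed.

Lemma gap_upper : olt rho t.
Proof.
  assert (Ht_rho : ~ order_le t rho).
  { intro H. exact (Hts_order (order_le_trans _ _ _ H Hrho_s)). }
  destruct (nested_comparable N rho t HNnested Hrho_in Ht_in) as [Hle | [Hle | [Hle | Hle]]].
  - split; [exact Hle |]. intros ->.
    apply (proj1 (proj1 (proj2 Ht_eff))).
    exact (pre_tangle_both_sides V E X t (HPP X HX) HX_rho HX_t).
  - exfalso. assert (Hsame : same_sep (flip t) rho).
    { apply (pre_tangle_same_sep V E X); auto. }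
    apply Ht_rho. rewrite <- order_le_flip_l. exact (proj1 (same_sep_order_le _ _ Hsame)).
  - exfalso. apply gap_not_below_flip.
    exact (ole_trans _ _ _ (proj1 Hst) (ole_flip_r _ _ Hle)).
  - exfalso.
    assert (HQt_rho : Qt rho).
    { apply (eff_distinguishes_agree_below V E t Qt X); auto using eff_distinguishes_sym. }
    assert (Hsame : same_sep rho t)
      by (apply (pre_tangle_same_sep V E Qt); auto using ole_flip_l).
    apply Ht_rho. exact (proj2 (same_sep_order_le _ _ Hsame)).
Qed.

End Middle.
End Gap.

Lemma strongly_relevant_pair_or_split s t :
  sep_in N s -> sep_in N t -> olt s t -> order_lt s t ->
  strongly_relevant_pair V E PP s t \/
  exists m, sep_in N m /\
    strongly_relevant_pair V E PP s m /\ strongly_relevant_pair V E PP m t.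
Proof.
  intros Hs Ht Hst [Hst_order Hts_order].
  destruct (relevant_oriented s Hs) as [Ps [Qs [HPs [HQs [Hs_eff [HPs_s HQs_s]]]]]].
  destruct (relevant_oriented t Ht) as [X [Qt [HX [HQt [Ht_eff [HX_t HQt_t]]]]]].
  destruct (classic (eff_distinguishes V E s Ps X)) as [Hdirect | Hnot_direct].
  - left. apply (gap_direct s t Ps Qs X Qt); auto.
  - right.
    destruct (gap_separation s t Ps Qs X Qt)
      as [rho [Hrho_in [Hrho_eff [HQs_rho [HX_rho Hs_rho]]]]]; auto.
    exists rho. split; [exact Hrho_in | split; split].
    + apply (gap_lower s t Ps Qs X Qt); auto.
    + exists Ps, Qs, X. auto 10.
    + apply (gap_upper s t Ps Qs X Qt); auto.
    + exists Qs, X, Qt. auto 10.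
Qed.

End Refinement.

Section ChainRefinement.
Context {A : Type}.
Variables (a : nat -> A) (mid : nat -> option A).

(* Position [(i, false)] holds [a i]; position [(i, true)] holds the element
   inserted after [a i]. *)
Definition refine_step (p : nat * bool) : nat * bool :=
  let (i, inserted) := p in
  if inserted then (S i, false)
  else match mid i with None => (S i, false) | Some _ => (i, true) end.

Fixpoint refine_position (n : nat) : nat * bool :=
  match n with 0 => (0, false) | S n => refine_step (refine_position n) end.

Definition refine_value (p : nat * bool) : A :=
  let (i, inserted) := p in
  match inserted, mid i with true, Some m => m | _, _ => a i end.

Fixpoint refine_index (i : nat) : nat :=
  match i with
  | 0 => 0
  | S i => refine_index i + match mid i with None => 1 | Some _ => 2 end
  end.

Lemma refine_position_index i : refine_position (refine_index i) = (i, false).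
Proof.
  induction i as [| i IH]; [reflexivity |]. simpl.
  destruct (mid i) eqn:Hm; rewrite Nat.add_comm; simpl; rewrite IH; simpl; rewrite Hm;
    reflexivity.
Qed.

Lemma refine_index_lt i : refine_index i < refine_index (S i).
Proof. simpl. destruct (mid i); lia. Qed.

End ChainRefinement.

Lemma refine_chain {A : Type} (R : A -> A -> Prop) (Q : A -> Prop) (a : nat -> A) :
  (forall i, Q (a i)) ->
  (forall i, R (a i) (a (S i)) \/ exists m, Q m /\ R (a i) m /\ R m (a (S i))) ->
  exists b : nat -> A, (forall n, Q (b n)) /\ (forall n, R (b n) (b (S n))) /\
    exists phi : nat -> nat, (forall i, phi i < phi (S i)) /\ forall i, b (phi i) = a i.
Proof.
  intros Ha Hgap.
  destruct (choice (fun i (o : option A) => match o with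
                    | None => R (a i) (a (S i))
                    | Some m => Q m /\ R (a i) m /\ R m (a (S i))
                    end)) as [mid Hmid].
  { intro i. destruct (Hgap i) as [H | [m H]]; [exists None | exists (Some m)]; exact H. }
  exists (fun n => refine_value a mid (refine_position mid n)). split; [| split].
  - intro n. destruct (refine_position mid n) as [i [|]]; simpl; [| apply Ha].
    specialize (Hmid i). destruct (mid i); [tauto | apply Ha].
  - intro n. simpl. destruct (refine_position mid n) as [i [|]]; simpl;
      specialize (Hmid i); destruct (mid i) eqn:Hm; simpl; rewrite ?Hm; tauto.
  - exists (refine_index mid). split; [apply refine_index_lt |].
    intro i. rewrite refine_position_index. reflexivity.
Qed.

Theorem mainTheorem15 (V : Type) (E : V -> V -> Prop)
  (E_sym : forall x y, E x y -> E y x) (E_irr : forall x, ~ E x x)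
  (PP : (osep V -> Prop) -> Prop)
  (HPP : forall P, PP P -> pre_tangle V E P)
  (N : osep V -> Prop)
  (HNproper : forall s, N s -> proper_sep V E s)
  (HNrel : forall s, N s -> relevant V E PP s)
  (HNnested : nested N)
  (HNeff : eff_distinguishes_set V E N PP)
  (s : nat -> osep V)
  (Hs_in : forall i, sep_in N (s i))
  (Hs_inc : strictly_increasing s)
  (Hs_ord : forall i, order_lt (s i) (s (S i))) :
  exists s' : nat -> osep V,
    (forall i, sep_in N (s' i)) /\
    strictly_increasing s' /\
    (exists phi : nat -> nat, (forall i, phi i < phi (S i)) /\
       forall i, s' (phi i) = s i) /\
    strongly_relevant_seq V E PP s'.
Proof.
  destruct (refine_chain (strongly_relevant_pair V E PP) (sep_in N) s Hs_in)
    as [s' [Hs'_in [Hs'_rel Hsub]]].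
  { intro i. apply (strongly_relevant_pair_or_split V E PP N); auto. }
  assert (Hs'_inc : strictly_increasing s') by (intro n; exact (proj1 (Hs'_rel n))).
  exists s'. split; [| split; [| split]]; auto.
  split; auto.
Qed.
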